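(* Let $S\subseteq\mathbb{R}^n\times\mathbb{R}^m$ be convex, let (MOCP) be self-bounded, fix $p\in[1,\infty]$ and $\epsilon>0$. If $\bar S\subseteq S$ is a finite $\epsilon$-solution of (MOCP) (under the $p$-norm), then $\bar S$ is a finite $(\overline{\kappa}\epsilon)$-solution of (CP) (under the $p$-norm), where $\overline{\kappa}=\overline{\kappa}(m,p)=\left(\frac{m^p+m-1}{m+1}\right)^{1/p}$ (equal to $m$ for $p=\infty$).
   Context: $\|\cdot\|_p$ is the $p$-norm and $B_\epsilon$ the closed $\epsilon$-ball around $0$. (CP): compute $Y=\{y:\exists x,(x,y)\in S\}$; recession cone $A_\infty=\{y: x+\lambda y\in A\ \forall x\in A,\lambda\ge0\}$. A nonempty finite $\bar S\subseteq S$ is a finite $\epsilon$-solution of a self-bounded (CP) if $Y\subseteq\operatorname{conv}\operatorname{proj}_y[\bar S]+(\operatorname{cl}Y)_\infty+B_\epsilon$ (where (CP) self-bounded means $Y\neq\mathbb{R}^m$ and $Y\subseteq\operatorname{conv}\{y^{(1)},\dots,y^{(k)}\}+(\operatorname{cl}Y)_\infty$ for finitely many points). (MOCP): minimize $P(x,y)=(y,-\mathbf{1}^\top y)$ ($\mathbf{1}\in\mathbb{R}^m$ all-ones) w.r.t. $\le_{\mathbb{R}^{m+1}_+}$ over $(x,y)\in S$, upper image $\mathcal{P}=\operatorname{cl}(P[S]+\mathbb{R}^{m+1}_+)$; (MOCP) is self-bounded if $\mathcal{P}\ne\mathbb{R}^{m+1}$ and $\mathcal{P}\subseteq\{q\}+\mathcal{P}_\infty$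 for some $q$. With $\mathbb{1}\in\mathbb{R}^{m+1}$ the all-ones vector, a nonempty finite $\bar S\subseteq S$ is a finite $\epsilon$-solution of (MOCP) if $\mathcal{P}\subseteq\operatorname{conv}P[\bar S]+\mathcal{P}_\infty-\epsilon\{\|\mathbb{1}\|_p^{-1}\mathbb{1}\}$. *)

From HB Require Import structures.
From mathcomp Require Import all_boot all_order all_algebra.
From mathcomp Require Import all_classical all_reals all_analysis.
Set Implicit Arguments. Unset Strict Implicit. Unset Printing Implicit Defensive.
Import Order.TTheory GRing.Theory Num.Theory.
Import numFieldNormedType.Exports.
Local Open Scope classical_set_scope.
Local Open Scope ring_scope.

Section Defs.
Variable R : realType.

Definition pnorm (p : \bar R) (k : nat) (x : 'rV[R]_k) : R :=
  match p with
  | EFin r => (\sum_(i < k) `|x 0 i| `^ r) `^ r^-1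
  | _ => \big[Num.max/0]_(i < k) `|x 0 i|
  end.

Definition pball (p : \bar R) (k : nat) (e : R) : set 'rV[R]_k :=
  [set x | pnorm p x <= e].

Definition msum (k : nat) (A B : set 'rV[R]_k) : set 'rV[R]_k :=
  [set a + b | a in A & b in B].

Definition conv (k : nat) (A : set 'rV[R]_k) : set 'rV[R]_k :=
  [set z | exists (N : nat) (lam : 'I_N -> R) (a : 'I_N -> 'rV[R]_k),
     [/\ forall i, 0 <= lam i, \sum_(i < N) lam i = 1,
         forall i, A (a i) & z = \sum_(i < N) lam i *: a i]].

Definition recc (k : nat) (A : set 'rV[R]_k) : set 'rV[R]_k :=
  [set y | forall x, A x -> forall l : R, 0 <= l -> A (x + l *: y)].

Definition orthant (k : nat) : set 'rV[R]_k := [set v | forall i, 0 <= v 0 i].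

Definition convex_prod (n m : nat) (S : set ('rV[R]_n * 'rV[R]_m)) :=
  forall a b, S a -> S b -> forall t : R, 0 <= t <= 1 ->
    S (t *: a.1 + (1 - t) *: b.1, t *: a.2 + (1 - t) *: b.2).

Definition CP_Y (n m : nat) (S : set ('rV[R]_n * 'rV[R]_m)) : set 'rV[R]_m :=
  snd @` S.

Definition Pobj (n m : nat) (z : 'rV[R]_n * 'rV[R]_m) : 'rV[R]_(m + 1) :=
  row_mx z.2 (\row_(_ < 1) (- \sum_(i < m) z.2 0 i)).

Definition upper_image (n m : nat) (S : set ('rV[R]_n * 'rV[R]_m))
  : set 'rV[R]_(m + 1) :=
  closure (msum ((@Pobj n m) @` S) (@orthant (m + 1))).

Definition MOCP_self_bounded (n m : nat) (S : set ('rV[R]_n * 'rV[R]_m)) :=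
  upper_image S != setT /\
  exists q : 'rV[R]_(m + 1),
    upper_image S `<=` msum [set q] (recc (upper_image S)).

Definition MOCP_finite_eps_sol (p : \bar R) (e : R) (n m : nat)
  (S Sbar : set ('rV[R]_n * 'rV[R]_m)) :=
  [/\ finite_set Sbar, Sbar !=set0, Sbar `<=` S &
   upper_image S `<=`
     msum (msum (conv ((@Pobj n m) @` Sbar)) (recc (upper_image S)))
          [set - ((e / pnorm p (const_mx 1 : 'rV[R]_(m + 1))) *: const_mx 1)]].

Definition CP_finite_eps_sol (p : \bar R) (e : R) (n m : nat)
  (S Sbar : set ('rV[R]_n * 'rV[R]_m)) :=
  [/\ finite_set Sbar, Sbar !=set0, Sbar `<=` S &
   CP_Y S `<=`
     msum (msum (conv (snd @` Sbar)) (recc (closure (CP_Y S))))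
          (pball p e)].

Definition kappa_bar (m : nat) (p : \bar R) : R :=
  match p with
  | EFin r => ((m%:R `^ r + m%:R - 1) / (m%:R + 1)) `^ r^-1
  | _ => m%:R
  end.

End Defs.

From Pilot Require Import Defs.
From HB Require Import structures.
From mathcomp Require Import all_boot all_order all_algebra.
From mathcomp Require Import all_classical all_reals all_analysis.
From mathcomp Require Import ring lra.
Import Order.TTheory GRing.Theory Num.Theory.
Import numFieldNormedType.Exports.
Local Open Scope classical_set_scope.
Local Open Scope ring_scope.
Set Implicit Arguments. Unset Strict Implicit. Unset Printing Implicit Defensive.

(* Let y = z.2 with z in S and write dl = eps / ||1||_p.  Since P(z) lies in the
   upper image, the MOCP solution gives P(z) = c + d - dl 1 with c a convex
   combination of points P(s), s in Sbar, and d a recession direction of the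
   upper image.  Reading off the first m coordinates gives y = ya + w - dl 1
   with ya in conv(Sbar_y) and w = lsubmx d; since every P(s) has coordinate sum
   zero, the coordinate sum of d equals (m + 1) dl  (mocp_decomposition).

   The direction w need not recede in cl Y, but P(z) + (N+1) d is approximated
   by points P(z_N) + o_N with o_N >= 0 (recession_approx).  The rescaled
   deficits (y + (N+1) w - z_N.2) / (N+1) are almost nonnegative with sum almost
   at most (m+1) dl, so they cluster at some u >= 0 with sum u <= (m+1) dl
   (cluster_simplex), and w - u is a recession direction of cl Y by convexity
   (recc_closure_of_cluster).  Hence y = ya + (w - u) + (u - dl 1), and the
   residual u - dl 1 has p-norm at most kappa_bar * dl * ||1||_p = kappa_bar * eps
   (kappa_bound, a convexity estimate for |.|^p over the scaled simplex). *)

Lemma le_sum_term (R : realType) (k : nat) (F : 'I_k -> R) (i : 'I_k) :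
  (forall j, 0 <= F j) -> F i <= \sum_j F j.
Proof.
by move=> F0; rewrite (bigD1 i) //= lerDl sumr_ge0.
Qed.

Lemma row_coord_dist (R : realType) (k : nat) (x y : 'rV[R]_k) (i : 'I_k) :
  `|x 0 i - y 0 i| <= `|x - y|.
Proof.
rewrite [leRHS]/Num.norm /= mx_normrE; apply/bigmax_geP; right.
by exists (0, i); rewrite //= !mxE.
Qed.

Lemma closure_normP (R : realType) (V : normedModType R) (A : set V) (x : V) :
  closure A x <-> forall e, 0 < e -> exists2 a, A a & `|x - a| < e.
Proof.
split=> [clA e e0 | approx B /nbhs_ballP[e e0 xeB]].
- have [a [Aa xa]] := clA _ (nbhsx_ballx x e e0).
  by exists a => //; rewrite -ball_normE in xa.
- have [a Aa xa] := approx e e0; exists a; split => //.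
  by apply: xeB; rewrite -ball_normE.
Qed.

Lemma cluster_nearP (R : realType) (V : normedModType R) (I : Type)
    (F : set_system I) {FF : Filter F} (x : I -> V) (u : V) (P : I -> Prop) (e : R) :
  cluster (x @ F) u -> F P -> 0 < e -> exists i, P i /\ `|u - x i| < e.
Proof.
move=> clu FP e0.
have xP : F (x @^-1` (x @` P)) by apply: filterS FP => i Pi; exists i.
have [_ [[i Pi <-] uxi]] := clu _ _ xP (nbhsx_ballx u e e0).
by exists i; split => //; rewrite -ball_normE in uxi.
Qed.

Lemma near_div_lt (R : realType) (b e : R) : 0 < e ->
  \forall N \near \oo, b / N.+1%:R < e.
Proof.
move=> e0; near=> N.
rewrite ltr_pdivrMr ?ltr0Sn // -ltr_pdivrMl //.
apply: lt_le_trans (_ : N%:R <= N.+1%:R); last by rewrite ler_nat.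
by near: N; exact: nbhs_infty_gtr.
Unshelve. all: by end_near.
Qed.

(** * The constant kappa_bar *)

(* The chord estimate: on [0, M + 1] the convex function v |-> |v - 1|^r lies
   below the chord joining its values 1 at 0 and M^r at M + 1. *)
Lemma powR_chord (R : realType) (M v r : R) :
  1 <= M -> 0 <= v <= M + 1 -> 1 <= r ->
  `|v - 1| `^ r <= 1 + v * (M `^ r - 1) / (M + 1).
Proof.
move=> M1 /andP[v0 vM] r1.
have M10 : 0 < M + 1 by lra.
have Mr1 : 1 <= M `^ r by have := ler_powR M1 (_ : 0 <= r); rewrite powRr0; apply; lra.
have rhs1 : 1 <= 1 + v * (M `^ r - 1) / (M + 1).
  by rewrite lerDl divr_ge0 ?(ltW M10) // mulr_ge0 // subr_ge0.
have [v1 | v1] := lerP v 1.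
  apply: le_trans rhs1; apply: le_trans (_ : _ <= 1 `^ r) _; last by rewrite powR1.
  by apply: ge0_ler_powR; rewrite ?nnegrE //; lra.
have x0 : 0 < v - 1 by lra.
have q1 : 1 <= M `^ (r - 1).
  by have := ler_powR M1 (_ : 0 <= r - 1); rewrite powRr0; apply; lra.
have xq : (v - 1) `^ (r - 1) <= M `^ (r - 1).
  by apply: ge0_ler_powR; rewrite ?nnegrE //; lra.
rewrite -mulr_powRB1 ?(ltW x0) ?(lt_le_trans ltr01 r1) //.
rewrite -[M `^ r](mulr_powRB1 _ (lt_le_trans ltr01 r1)); last lra.
move: q1 xq; set q := M `^ (r - 1) => q1 xq.
apply: le_trans (_ : (v - 1) * q <= _); first by rewrite ler_wpM2l // ltW.
rewrite -(@ler_pM2r _ (M + 1)) // [leRHS]mulrDl mul1r divfK ?gt_eqF //.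
nra.
Qed.

(* Summing the chord estimate over the coordinates of u - d 1, for u in the
   scaled simplex {u >= 0, sum u <= (k + 1) d}. *)
Lemma sum_powR_dev (R : realType) (k : nat) (r d : R) (u : 'rV[R]_k) :
  (0 < k)%N -> 1 <= r -> 0 < d -> (forall i, 0 <= u 0 i) ->
  \sum_i u 0 i <= (k%:R + 1) * d ->
  \sum_i `|u 0 i - d| `^ r <= d `^ r * (k%:R `^ r + k%:R - 1).
Proof.
move=> k0 r1 d0 u0 u_sum.
set M := k%:R; have M1 : 1 <= M by rewrite ler1n.
have M10 : 0 < M + 1 by lra.
have Mr1 : 1 <= M `^ r by have := ler_powR M1 (_ : 0 <= r); rewrite powRr0; apply; lra.
have dev i : `|u 0 i - d| `^ r <= d `^ r * (1 + u 0 i / d * (M `^ r - 1) / (M + 1)).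
  have -> : u 0 i - d = d * (u 0 i / d - 1) by field; rewrite gt_eqF.
  rewrite normrM gtr0_norm // powRM ?(ltW d0) // ler_wpM2l ?powR_ge0 //.
  apply: powR_chord => //; rewrite divr_ge0 ?(ltW d0) //= ler_pdivrMr //.
  exact: le_trans (le_sum_term i u0) u_sum.
apply: le_trans (ler_sum _ (fun i _ => dev i)) _.
rewrite -mulr_sumr ler_wpM2l ?powR_ge0 // big_split /= sumr_const card_ord.
rewrite -!mulr_suml -/M.
have v_le : (\sum_i u 0 i) / d <= M + 1 by rewrite ler_pdivrMr // mulrC.
have : (\sum_i u 0 i) / d * (M `^ r - 1) / (M + 1) <= M `^ r - 1.
  by rewrite ler_pdivrMr // mulrC ler_wpM2l // subr_ge0.
lra.
Qed.

Lemma pnorm_const1_fin (R : realType) (k : nat) (r : R) :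
  pnorm (EFin r) (const_mx 1 : 'rV[R]_k) = k%:R `^ r^-1.
Proof.
rewrite /pnorm; under eq_bigr do rewrite mxE normr1 powR1.
by rewrite sumr_const card_ord.
Qed.

Lemma pnorm_const1_inf (R : realType) (k : nat) :
  (0 < k)%N -> pnorm (+oo)%E (const_mx 1 : 'rV[R]_k) = 1.
Proof.
case: k => // k _; rewrite /pnorm; apply/eqP; rewrite eq_le; apply/andP; split.
  by apply: bigmax_le => // i _; rewrite mxE normr1.
apply: le_trans (le_bigmax _ _ ord0); by rewrite mxE normr1.
Qed.

Lemma pnorm_const1_gt0 (R : realType) (k : nat) (p : \bar R) :
  (0 < k)%N -> (1 <= p)%E -> 0 < pnorm p (const_mx 1 : 'rV[R]_k).
Proof.
move=> k0; case: p => [r | | ] // _; last by rewrite pnorm_const1_inf.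
by rewrite pnorm_const1_fin powR_gt0 // ltr0n.
Qed.

Lemma kappa_bound_fin (R : realType) (m : nat) (r d : R) (u : 'rV[R]_m) :
  1 <= r -> 0 < d -> (forall i, 0 <= u 0 i) ->
  \sum_i u 0 i <= (m%:R + 1) * d ->
  pnorm (EFin r) (u - d *: const_mx 1) <=
    kappa_bar m (EFin r) * (d * pnorm (EFin r) (const_mx 1 : 'rV[R]_(m + 1))).
Proof.
move=> r1 d0 u0 u_sum.
have s0 : r^-1 != 0 by rewrite invr_eq0 gt_eqF // (lt_le_trans ltr01 r1).
rewrite /kappa_bar pnorm_const1_fin /pnorm.
under eq_bigr do rewrite !mxE mulr1.
case: (posnP m) => [m0 | m_gt0].
  move: u u0 u_sum; rewrite m0 => u _ _.
  by rewrite big_ord0 powR0 // mulr_ge0 ?powR_ge0 // mulr_ge0 ?powR_ge0 // ltW.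
have r0 : 0 < r by apply: lt_le_trans r1.
set A := m%:R `^ r + m%:R - 1.
have A0 : 0 <= A.
  have m1 : 1 <= m%:R :> R by rewrite ler1n.
  by have := ler_powR m1 (ltW r0); rewrite powRr0 /A; lra.
have m10 : 0 < m%:R + 1 :> R by rewrite ltr_wpDl.
have -> : (A / (m%:R + 1)) `^ r^-1 * (d * (m + 1)%:R `^ r^-1) = d * A `^ r^-1.
  rewrite natrD mulrCA -powRM ?divfK ?gt_eqF ?divr_ge0 // ?ltW //.
apply: le_trans (ge0_ler_powR _ _ _ (sum_powR_dev _ _ _ _ _)) _ => //.
- by rewrite invr_ge0 ltW.
- by rewrite nnegrE sumr_ge0 // => i _; rewrite powR_ge0.
- by rewrite nnegrE mulr_ge0 // powR_ge0.
by rewrite powRM ?powR_ge0 // -powRrM mulfV ?gt_eqF // powRr1 // ltW.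
Qed.

Lemma kappa_bound_inf (R : realType) (m : nat) (d : R) (u : 'rV[R]_m) :
  0 < d -> (forall i, 0 <= u 0 i) -> \sum_i u 0 i <= (m%:R + 1) * d ->
  pnorm (+oo)%E (u - d *: const_mx 1) <=
    kappa_bar m (+oo)%E * (d * pnorm (+oo)%E (const_mx 1 : 'rV[R]_(m + 1))).
Proof.
move=> d0 u0 u_sum; rewrite pnorm_const1_inf ?addn1 // mulr1 /kappa_bar /pnorm.
apply: bigmax_le => [|i _]; first by rewrite mulr_ge0 // ltW.
have m1 : 1 <= m%:R :> R by rewrite ler1n (leq_ltn_trans (leq0n i) (ltn_ord i)).
have ui := le_trans (le_sum_term i u0) u_sum.
have := u0 i; rewrite !mxE mulr1 ler_norml; move: ui; set x := u 0 i.
move=> ui ui0; apply/andP; split; nra.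
Qed.

Lemma kappa_bound (R : realType) (m : nat) (p : \bar R) (d : R) (u : 'rV[R]_m) :
  (1 <= p)%E -> 0 < d -> (forall i, 0 <= u 0 i) ->
  \sum_i u 0 i <= (m%:R + 1) * d ->
  pnorm p (u - d *: const_mx 1) <=
    kappa_bar m p * (d * pnorm p (const_mx 1 : 'rV[R]_(m + 1))).
Proof.
case: p => [r | | ] // r1; last exact: kappa_bound_inf.
by apply: kappa_bound_fin; rewrite -lee_fin.
Qed.

(** * Recession directions from asymptotic behaviour *)

Definition convex_rV (R : realType) (k : nat) (A : set 'rV[R]_k) :=
  forall a b, A a -> A b -> forall t : R, 0 <= t <= 1 -> A (t *: a + (1 - t) *: b).

(* If points y N of a convex set Y satisfy y N = y0 + (N + 1) (w - v N) and the
   v N cluster at u, then w - u is a recession direction of cl Y: the segments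
   from points of Y towards y N converge to half-lines in the direction w - u. *)
Lemma recc_closure_of_cluster (R : realType) (k : nat) (Y : set 'rV[R]_k)
    (y0 w u : 'rV[R]_k) (y : nat -> 'rV[R]_k) :
  convex_rV Y -> (forall N, Y (y N)) ->
  cluster ((fun N => N.+1%:R^-1 *: (y0 + N.+1%:R *: w - y N)) @ \oo) u ->
  recc (closure Y) (w - u).
Proof.
move=> convY Yy clu x clx l l0; apply/closure_normP => e e0.
have e3 : 0 < e / 3 by rewrite divr_gt0.
have [x' Yx' xx'] := proj1 (closure_normP _ _) clx _ e3.
have el : 0 < e / 3 / (l + 1) by rewrite !divr_gt0 // ltr_wpDl.
have [N [[sl1 sD] uN]] := cluster_nearP clu (filterI (near_div_lt l ltr01)
  (near_div_lt (l * `|x' - y0|) e3)) el.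
have N0 : 0 < N.+1%:R :> R by rewrite ltr0Sn.
set s := l / N.+1%:R in sl1 sD *.
have s0 : 0 <= s by rewrite divr_ge0 // ltW.
exists ((1 - s) *: x' + (1 - (1 - s)) *: y N).
  by apply: convY => //; apply/andP; split; lra.
have -> : x + l *: (w - u) - ((1 - s) *: x' + (1 - (1 - s)) *: y N) =
    (x - x') + s *: (x' - y0) - l *: (u - N.+1%:R^-1 *: (y0 + N.+1%:R *: w - y N)).
  by apply/rowP => i; rewrite !mxE /s; field; rewrite gt_eqF.
apply: le_lt_trans (ler_normB _ _) _.
apply: le_lt_trans (lerD (ler_normD _ _) (lexx _)) _.
rewrite !normrZ (ger0_norm l0) [`|N.+1%:R^-1|]ger0_norm; last by rewrite invr_ge0 ltW.
have sD' : l / N.+1%:R * `|x' - y0| < e / 3 by rewrite mulrAC.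
have lu : l * `|u - N.+1%:R^-1 *: (y0 + N.+1%:R *: w - y N)| <= e / 3.
  apply: le_trans (_ : l * (e / 3 / (l + 1)) <= _).
    by rewrite ler_wpM2l // ltW.
  by rewrite mulrA ler_pdivrMr ?ltr_wpDl //; nra.
move: xx' sD' lu.
set a := `|x - x'|; set b := _ * `|x' - y0|; set c := l * _.
lra.
Qed.

Lemma cluster_in_box (R : realType) (k : nat) (x : nat -> 'rV[R]_k) (lo hi : R) :
  (forall N i, lo <= x N 0 i <= hi) ->
  exists2 u : 'rV[R]_k, (forall i, lo <= u 0 i <= hi) & cluster (x @ \oo) u.
Proof.
move=> x_box.
pose Box := [set v : 'rV[R]_k | forall i, `[lo, hi]%classic (v 0 i)].
have cBox : compact Box.
  by apply: (@rV_compact _ _ (fun=> `[lo, hi]%classic)) => _; exact: segment_compact.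
have xBox : (x @ \oo) Box by exists 0%N => // N _ i /=; rewrite in_itv /= x_box.
have [u [Bu clu]] := cBox _ _ xBox.
by exists u => // i; have := Bu i; rewrite /= in_itv.
Qed.

Lemma cluster_point_simplex (R : realType) (k : nat) (v : nat -> 'rV[R]_k)
    (a c K : R) (u : 'rV[R]_k) :
  (forall N i, - (a / N.+1%:R) <= v N 0 i) ->
  (forall N, \sum_i v N 0 i <= c + K / N.+1%:R) ->
  cluster (v @ \oo) u -> (forall i, 0 <= u 0 i) /\ \sum_i u 0 i <= c.
Proof.
move=> v_lb v_sum clu; split.
- move=> i; apply/ler_addgt0Pr => e e0.
  have e2 : 0 < e / 2 by rewrite divr_gt0.
  have [N [aN uv]] := cluster_nearP clu (near_div_lt a e2) e2.
  have := le_lt_trans (row_coord_dist u (v N) i) uv.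
  rewrite ltr_norml => /andP[uv1 _]; have := v_lb N i.
  move: aN uv1; set x := a / _; lra.
- apply/ler_addgt0Pr => e e0.
  have e2 : 0 < e / 2 by rewrite divr_gt0.
  have ek : 0 < e / 2 / k.+1%:R by rewrite divr_gt0 // ltr0Sn.
  have [N [KN uv]] := cluster_nearP clu (near_div_lt K e2) ek.
  have : \sum_i u 0 i <= \sum_i (v N 0 i + e / 2 / k.+1%:R).
    apply: ler_sum => i _; have := le_lt_trans (row_coord_dist u (v N) i) uv.
    by rewrite ltr_norml => /andP[_ /ltW]; rewrite lerBlDl addrC.
  rewrite big_split /= sumr_const card_ord.
  have : (e / 2 / k.+1%:R) *+ k <= e / 2.
    by rewrite -mulr_natr mulrAC ler_pdivrMr ?ltr0Sn // ler_pM2l // ler_nat.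
  have := v_sum N; move: KN; set y := K / _; move: ((e / 2 / _) *+ k) => z.
  lra.
Qed.

(* If g N is bounded below by - a and sum (g N) <= (N + 1) c + K, then the
   rescaled sequence g N / (N + 1) clusters in the simplex {u >= 0, sum u <= c}:
   it stays in a coordinate box, and the bounds pass to the limit. *)
Lemma cluster_simplex (R : realType) (k : nat) (g : nat -> 'rV[R]_k) (a c K : R) :
  0 <= a -> 0 <= K ->
  (forall N i, - a <= g N 0 i) ->
  (forall N, \sum_i g N 0 i <= N.+1%:R * c + K) ->
  exists2 u : 'rV[R]_k, (forall i, 0 <= u 0 i) /\ \sum_i u 0 i <= c &
    cluster ((fun N => N.+1%:R^-1 *: g N) @ \oo) u.
Proof.
move=> a0 K0 g_lb g_sum.
pose v N := N.+1%:R^-1 *: g N.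
have N0 N : 0 < N.+1%:R :> R by rewrite ltr0Sn.
have v_lb N i : - (a / N.+1%:R) <= v N 0 i.
  by rewrite mxE -mulNr [leLHS]mulrC ler_wpM2l // invr_ge0 ltW.
have v_sum N : \sum_i v N 0 i <= c + K / N.+1%:R.
  under eq_bigr do rewrite mxE.
  by rewrite -mulr_sumr mulrC ler_pdivrMr // mulrDl divfK ?gt_eqF // mulrC.
suff [u u_box clu] : exists2 u : 'rV[R]_k,
    (forall i, - a <= u 0 i <= c + K + a *+ k) & cluster (v @ \oo) u.
  by exists u => //; exact: cluster_point_simplex v_lb v_sum clu.
clearbody v; apply: cluster_in_box => N i.
have aN : a / N.+1%:R <= a by rewrite ler_pdivrMr // ler_peMr // ler1n.
have KN : K / N.+1%:R <= K by rewrite ler_pdivrMr // ler_peMr // ler1n.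
have akN : (a / N.+1%:R) *+ k <= a *+ k by rewrite lerMn2r aN orbT.
have aN0 : 0 <= a / N.+1%:R by rewrite divr_ge0 // ltW.
have v_shift j : 0 <= v N 0 j + a / N.+1%:R.
  by have := v_lb N j; rewrite -subr_ge0 opprK addrC.
have := @le_sum_term _ _ (fun j => v N 0 j + a / N.+1%:R) i v_shift.
rewrite big_split /= sumr_const card_ord.
have := v_sum N; have := v_lb N i.
move: aN KN akN aN0; set x := a / _; set y := K / _.
move: (x *+ k) (a *+ k) => z ak; lra.
Qed.

(** * The objective map P(x, y) = (y, - 1^T y) *)

Section Objective.
Variables (R : realType) (n m : nat).
Implicit Types (S : set ('rV[R]_n * 'rV[R]_m)) (z : 'rV[R]_n * 'rV[R]_m).

Lemma sum_coords_split (v : 'rV[R]_(m + 1)) :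
  \sum_j v 0 j = \sum_i lsubmx v 0 i + v 0 (rshift m ord0).
Proof. by rewrite big_split_ord big_ord1 /=; under [in RHS]eq_bigr do rewrite mxE. Qed.

Lemma lsubmx_Pobj z : lsubmx (Pobj z) = z.2.
Proof. exact: row_mxKl. Qed.

Lemma sum_coords_Pobj z : \sum_j Pobj z 0 j = 0.
Proof.
by rewrite sum_coords_split lsubmx_Pobj /Pobj row_mxEr mxE subrr.
Qed.

Lemma sum_coords_comb (k N : nat) (lam : 'I_N -> R) (a : 'I_N -> 'rV[R]_k) :
  \sum_j (\sum_i lam i *: a i) 0 j = \sum_i lam i * \sum_j a i 0 j.
Proof.
under eq_bigr do rewrite summxE; under eq_bigr do under eq_bigr do rewrite mxE.
by rewrite exchange_big; apply: eq_bigr => i _; rewrite mulr_sumr.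
Qed.

Lemma Pobj_upper_image S z : S z -> upper_image S (Pobj z).
Proof.
move=> Sz; apply: subset_closure; exists (Pobj z); first by exists z.
by exists 0; [move=> i; rewrite mxE | rewrite addr0].
Qed.

Lemma convex_CP_Y S : convex_prod S -> convex_rV (CP_Y S).
Proof.
move=> convS _ _ [za Sa <-] [zb Sb <-] t t01.
by exists (t *: za.1 + (1 - t) *: zb.1, t *: za.2 + (1 - t) *: zb.2) => //; apply: convS.
Qed.

Lemma mocp_decomposition (Sbar : set ('rV[R]_n * 'rV[R]_m))
    (D : set 'rV[R]_(m + 1)) (dl : R) z :
  Defs.msum (Defs.msum (Defs.conv (@Pobj R n m @` Sbar)) D)
    [set - (dl *: const_mx 1)] (Pobj z) ->
  exists ya d, [/\ Defs.conv (snd @` Sbar) ya, D d,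
    z.2 = ya + lsubmx d - dl *: const_mx 1 &
    \sum_j d 0 j = (m%:R + 1) * dl].
Proof.
move=> [_ [c [N [lam [a [lam0 lam1 a_img ->]]]] [d Dd <-]] [_ -> Pz_eq]].
have /choice[s s_def] : forall i, exists s, Sbar s /\ Pobj s = a i.
  by move=> i; have [si Si <-] := a_img i; exists si.
exists (\sum_i lam i *: (s i).2), d; split => //.
- exists N, lam, (fun i => (s i).2); split => // i.
  by exists (s i); [case: (s_def i)|].
- rewrite -lsubmx_Pobj -Pz_eq !linearD /= linear_sum /=.
  congr (_ + _ + _); last by rewrite linearN linearZ /= lsubmx_const.
  by apply: eq_bigr => i _; rewrite linearZ /= -(proj2 (s_def i)) lsubmx_Pobj.
- have := sum_coords_Pobj z; rewrite -Pz_eq.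
  under eq_bigr do rewrite !mxE mulr1.
  rewrite !big_split /= sum_coords_comb big1 => [|i _]; last first.
    by rewrite -(proj2 (s_def i)) sum_coords_Pobj mulr0.
  by rewrite sumrN sumr_const card_ord -[dl *+ _]mulr_natr natrD; lra.
Qed.

Lemma recession_approx S z (d : 'rV[R]_(m + 1)) (N : nat) :
  S z -> recc (upper_image S) d ->
  exists y, CP_Y S y /\
    (forall i, -1 <= (z.2 + N.+1%:R *: lsubmx d - y) 0 i) /\
    \sum_i (z.2 + N.+1%:R *: lsubmx d - y) 0 i <= N.+1%:R * \sum_j d 0 j + 1.
Proof.
move=> Sz rec_d.
have := rec_d _ (Pobj_upper_image Sz) N.+1%:R (ler0n _ _).
case/closure_normP/(_ 1 ltr01) => _ [_ [z' Sz' <-] [ob ob0 <-]] err.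
exists z'.2; split; first by exists z'.
have err_j j : -1 < Pobj z 0 j + N.+1%:R * d 0 j - (Pobj z' 0 j + ob 0 j).
  have := le_lt_trans (row_coord_dist _ _ j) err.
  rewrite [(_ + ob) 0 j]mxE [(_ + _ *: d) 0 j]mxE [(_ *: d) 0 j]mxE.
  by rewrite ltr_norml => /andP[].
split.
  move=> i; have := err_j (lshift 1 i); have := ob0 (lshift 1 i).
  by rewrite /Pobj !row_mxEl !mxE; lra.
rewrite (sum_coords_split d); under eq_bigr do rewrite !mxE.
under [X in _ <= _ * (X + _) + _]eq_bigr do rewrite mxE.
rewrite !big_split /= -mulr_sumr sumrN.
have := err_j (rshift m ord0); have := ob0 (rshift m ord0).
by rewrite /Pobj !row_mxEr !mxE; nra.
Qed.

End Objective.

Theorem mainTheorem7 (R : realType) (n m : nat)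
  (S : set ('rV[R]_n * 'rV[R]_m)) (p : \bar R) (e : R)
  (Sbar : set ('rV[R]_n * 'rV[R]_m)) :
  convex_prod S ->
  MOCP_self_bounded S ->
  (1 <= p)%E ->
  0 < e ->
  MOCP_finite_eps_sol p e S Sbar ->
  CP_finite_eps_sol p (kappa_bar m p * e) S Sbar.
Proof.
move=> convS _ p1 e0 [finSb neSb subSb sol]; split => // _ [z Sz <-].
have pn0 : 0 < pnorm p (const_mx 1 : 'rV[R]_(m + 1)).
  by apply: pnorm_const1_gt0; rewrite ?addn1.
set dl := e / pnorm p _ in sol.
have dl0 : 0 < dl by rewrite divr_gt0.
have [ya [d [conv_ya rec_d z_eq sum_d]]] :=
  mocp_decomposition (sol _ (Pobj_upper_image Sz)).
have /choice[y approx] := fun N => recession_approx N Sz rec_d.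
have [u [u0 sum_u] clu] := @cluster_simplex _ _
  (fun N => z.2 + N.+1%:R *: lsubmx d - y N) 1 _ 1 ler01 ler01
  (fun N => proj1 (proj2 (approx N))) (fun N => proj2 (proj2 (approx N))).
have rec_wu := recc_closure_of_cluster (convex_CP_Y convS)
  (fun N => proj1 (approx N)) clu.
exists (ya + (lsubmx d - u)); first by exists ya => //; exists (lsubmx d - u).
exists (u - dl *: const_mx 1); last by rewrite z_eq !addrA subrK.
rewrite /pball /=; apply: le_trans (kappa_bound p1 dl0 u0 _) _.
  by rewrite -sum_d.
by rewrite /dl divfK ?gt_eqF.
Qed.
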